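(* Every countable subgroup of $(\mathbb R,+)$ that is not finitely generated has exactly one end. In particular, the group $(\mathbb Q,+)$ has one end.
   Context: For a countable group $G$ equipped with a proper left-invariant metric (balls finite, $d(gh_1,gh_2)=d(h_1,h_2)$), the number of ends of $G$ is the cardinality of $CF(G)\setminus G$, where for a proper metric space $X$, $CF(X)$ is the compactification induced by all continuous glacially oscillating functions $X\to[0,1]$ (a function $f$ is glacially oscillating if for every $\epsilon>0$ there is a glacial scale $\mathcal S=\{(K_i,n_i)\}$ — $K_i$ bounded, $n_i\in\mathbb N$, with every bounded set contained in some $K_i$ having $n_i$ arbitrarily large — such that $|f(x_1)-f(x_n)|<\epsilon$ whenever $x_1,\dots,x_n$ is a sequence where each consecutive pair avoids some $K_m$ and is at distance $\le n_m$). Equivalently, an infinite $G$ has one end iff every almost invariant subset $A$ ($A\,\Delta\,(Ag)$ finite for all $g$) is finite or has finite complement. *)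

From HB Require Import structures.
From mathcomp Require Import all_boot all_order all_algebra.
From mathcomp Require Import boolp classical_sets cardinality reals.
Set Implicit Arguments. Unset Strict Implicit. Unset Printing Implicit Defensive.
Import Order.TTheory GRing.Theory Num.Theory.
Local Open Scope ring_scope.
Local Open Scope classical_set_scope.

Section Metric.
Variables (R : realType) (T : Type) (d : T -> T -> R).

Definition is_metric : Prop :=
  (forall x y, 0 <= d x y) /\ (forall x y, d x y = 0 <-> x = y) /\
  (forall x y, d x y = d y x) /\ (forall x y z, d x z <= d x y + d y z).

Definition proper_metric : Prop :=
  forall (x : T) (r : R), finite_set [set y | d x y <= r].

Definition bounded_set (B : set T) : Prop :=
  exists (x : T) (r : R), B `<=` [set y | d x y <= r].

Definition glacial_scale (S : set (set T * nat)) : Prop :=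
  (forall K n, S (K, n) -> bounded_set K) /\
  (forall B, bounded_set B -> forall N : nat,
     exists K n, [/\ S (K, n), B `<=` K & (N <= n)%N]).

Definition S_step (S : set (set T * nat)) (x y : T) : Prop :=
  exists K n, [/\ S (K, n), ~ K x, ~ K y & d x y <= n%:R].

(* x0 :: s is an S-chain (a sequence x_1 = x0, ..., x_n = last x0 s) *)
Fixpoint S_chain (S : set (set T * nat)) (x0 : T) (s : seq T) : Prop :=
  match s with
  | [::] => True
  | y :: s' => S_step S x0 y /\ S_chain S y s'
  end.

Definition glacially_oscillating (f : T -> R) : Prop :=
  forall eps : R, 0 < eps -> exists S, glacial_scale S /\
    forall (x0 : T) (s : seq T), S_chain S x0 s -> `|f x0 - f (last x0 s)| < eps.

Definition metric_continuous (f : T -> R) : Prop :=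
  forall (x : T) (eps : R), 0 < eps -> exists delta : R, 0 < delta /\
    forall y, d x y < delta -> `|f x - f y| < eps.

Definition GOfun := {f : T -> R |
  [/\ forall x, 0 <= f x <= 1, metric_continuous f & glacially_oscillating f]}.

(* CF(T) = closure of the image of the evaluation embedding T -> [0,1]^GOfun
   (product topology); points of [0,1]^GOfun are functions GOfun -> R. *)
Definition in_CF (p : GOfun -> R) : Prop :=
  forall (n : nat) (fs : 'I_n -> GOfun) (eps : R), 0 < eps ->
    exists x : T, forall i, `|sval (fs i) x - p (fs i)| < eps.

Definition in_image (p : GOfun -> R) : Prop :=
  exists x : T, forall f : GOfun, p f = sval f x.

Definition has_one_end : Prop :=
  exists p, [/\ in_CF p, ~ in_image p &
    forall q, in_CF q -> ~ in_image q -> q = p].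

End Metric.

Section Subgroups.
Variable R : realType.

Definition is_subgroup (G : set R) : Prop :=
  G 0 /\ forall x y, G x -> G y -> G (x - y).

Definition finitely_generated (G : set R) : Prop :=
  exists s : seq R, G = [set x | exists c : 'I_(size s) -> int,
                                   x = \sum_(i < size s) (c i)%:~R * s`_i].

Definition left_invariant (G : set R) (d : {x : R | G x} -> {x : R | G x} -> R) :=
  forall g h1 h2 k1 k2 : {x : R | G x},
    sval k1 = sval g + sval h1 -> sval k2 = sval g + sval h2 -> d k1 k2 = d h1 h2.

Definition rationals : set R := [set x | exists q : rat, x = ratr q].

End Subgroups.

(* Corollary 5.13: a subgroup G of (R, +) that is not finitely generated has
   exactly one end for every proper left-invariant metric d; in particular
   (Q, +) has one end.

   Fix e <> 0 in G.  Algebra: for a finite set l in G there is c in G such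
   that for every x one of the rays x + eN, x + c + eN misses l, since
   otherwise G would be generated by e and the differences of l
   ([escape_shift]).  Geometry: given a glacial scale S, a ray missing the
   set K of a pair (K, n) with n >= |e| is an S-chain; two such rays are
   joined far out because translation keeps their gap constant; and a point
   outside a fixed ball is joined to x + c.  Hence points far from the origin
   are S-chain connected ([far_reach]), so every glacially oscillating f has a
   value [Lim f] at infinity.  The point [end_point] of [0,1]^GOfun it defines
   lies in CF(G), is no evaluation (test a bump function), and is the only
   non-evaluation point of CF(G) ([end_point_unique]).  Finally Q is a
   subgroup that is not finitely generated (common denominators). *)

From HB Require Import structures.
From mathcomp Require Import all_boot all_order all_algebra.
From mathcomp Require Import boolp classical_sets cardinality reals.
From mathcomp Require Import ring lra zify.
Set Implicit Arguments. Unset Strict Implicit. Unset Printing Implicit Defensive.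
Import Order.TTheory GRing.Theory Num.Theory.
Local Open Scope ring_scope.
Local Open Scope classical_set_scope.

Definition span (R : realType) (s : seq R) : set R :=
  [set x | exists c : 'I_(size s) -> int, x = \sum_(i < size s) (c i)%:~R * s`_i].

Lemma span_add (R : realType) (s : seq R) x y :
  span s x -> span s y -> span s (x + y).
Proof.
move=> [c ->] [c' ->]; exists (fun i => c i + c' i).
by rewrite -big_split /=; apply: eq_bigr => i _; rewrite intrD mulrDl.
Qed.

Lemma span_nth (R : realType) (s : seq R) (i : 'I_(size s)) (z : int) :
  span s (z%:~R * s`_i).
Proof.
exists (fun j => if j == i then z else 0).
rewrite (bigD1 i) //= eqxx big1 ?addr0 // => j /negbTE ->; by rewrite mul0r.
Qed.

Lemma span_mem (R : realType) (s : seq R) x (z : int) :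
  x \in s -> span s (x *~ z).
Proof.
move=> xs; have xi : (index x s < size s)%N by rewrite index_mem.
by have := span_nth (Ordinal xi) z; rewrite /= (nth_index 0 xs) mulrzl.
Qed.

Lemma ray_escapes (F : archiRealFieldType) (e u : F) (l : seq F) : e != 0 ->
  exists k0, forall k, (k0 <= k)%N -> u + e *+ k \notin l.
Proof.
move=> e0; set M := \sum_(y <- l) `|y|.
have M0 : 0 <= M by apply: sumr_ge0.
have e_gt0 : 0 < `|e| by rewrite normr_gt0.
have bound_l y : y \in l -> `|y| <= M.
  move=> yl; rewrite /M (perm_big _ (perm_to_rem yl)) big_cons lerDl.
  exact: sumr_ge0.
have B0 : 0 <= (M + `|u|) / `|e| by rewrite divr_ge0 // addr_ge0.
exists (Num.Def.archi_bound ((M + `|u|) / `|e|)) => k kbig; apply/negP => /bound_l.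
have big_k : M + `|u| < k%:R * `|e|.
  rewrite -ltr_pdivrMr //; apply: lt_le_trans (archi_boundP B0) _.
  by rewrite ler_nat.
have := lerB_normD (e *+ k) u; rewrite [e *+ k + u]addrC normrMn -mulr_natl.
lra.
Qed.

Lemma pos_lower_bound (F : realDomainType) (A : eqType) (f : A -> F) (l : seq A) b :
  0 < b -> (forall y, 0 < f y) ->
  exists eps, [/\ 0 < eps, eps <= b & forall y, y \in l -> eps <= f y].
Proof.
move=> b_gt0 f_gt0; elim: l => [|z l [eps [eps_gt0 eps_le eps_l]]].
  by exists b; split=> // y; rewrite in_nil.
exists (Num.min (f z) eps); split; first by rewrite lt_min f_gt0.
  by rewrite ge_min eps_le orbT.
move=> y; rewrite inE => /predU1P [->|yl]; first by rewrite ge_min lexx.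
by rewrite ge_min eps_l ?orbT.
Qed.

Section Subgroup.
Variables (R : realType) (G : set R).
Hypothesis hG : is_subgroup G.

Lemma subgroup0 : G 0. Proof. by case: hG. Qed.

Lemma subgroupB x y : G x -> G y -> G (x - y). Proof. by case: hG => _; apply. Qed.

Lemma subgroupN x : G x -> G (- x).
Proof. by move=> Gx; have := subgroupB subgroup0 Gx; rewrite sub0r. Qed.

Lemma subgroupD x y : G x -> G y -> G (x + y).
Proof. by move=> Gx Gy; have := subgroupB Gx (subgroupN Gy); rewrite opprK. Qed.

Lemma subgroupMn x n : G x -> G (x *+ n).
Proof.
move=> Gx; elim: n => [|n IH]; first by rewrite mulr0n; exact: subgroup0.
by rewrite mulrS; apply: subgroupD.
Qed.

Lemma subgroupMz x (z : int) : G x -> G (x *~ z).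
Proof.
move=> Gx; case: z => n; first exact: subgroupMn.
by rewrite NegzE mulrNz; apply/subgroupN/subgroupMn.
Qed.

Lemma span_sub (s : seq R) : (forall x, x \in s -> G x) -> span s `<=` G.
Proof.
move=> sG x [c ->]; apply: (big_ind G) => //; [exact: subgroup0|exact: subgroupD|].
by move=> i _; rewrite mulrzl; apply: subgroupMz; apply: sG; exact: mem_nth.
Qed.

Hypothesis nfg : ~ finitely_generated G.

Lemma nonzero_elem : exists2 e, G e & e != 0.
Proof.
apply: contrapT => no_e; apply: nfg; exists [::]; apply/seteqP; split => x /=.
  move=> Gx; have -> : x = 0 by apply: contrapT => /eqP x0; apply: no_e; exists x.
  by exists (fun _ => 0); rewrite big_ord0.
by move=> [c ->]; rewrite big_ord0; exact: subgroup0.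
Qed.

(* The algebraic heart of the argument: for e in G and a finite l in G there
   is c in G such that, for every x, one of the two rays x + eN, x + c + eN
   avoids l.  Otherwise every c in G would be an integer combination of e and
   the differences of elements of l, making G finitely generated. *)
Lemma escape_shift e (l : seq R) : G e -> (forall x, x \in l -> G x) ->
  exists2 c, G c & forall x,
    (forall k, x + e *+ k \notin l) \/ (forall k, x + c + e *+ k \notin l).
Proof.
move=> Ge lG; set s := e :: [seq a' - a | a <- l, a' <- l].
have e_s : e \in s by rewrite inE eqxx.
apply: contrapT => no_c; apply: nfg; exists s; apply/seteqP; split=> [c Gc|].
  have [x hit1 hit2] : exists2 x, ~ (forall k, x + e *+ k \notin l)
                                & ~ (forall k, x + c + e *+ k \notin l).
    apply: contrapT => h; apply: no_c; exists c => // x.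
    by apply: contrapT => /not_orP[h1 h2]; apply: h; exists x.
  have [k /negP/negPn a_l] := (existsNP _).2 hit1.
  have [k' /negP/negPn a'_l] := (existsNP _).2 hit2.
  have diff_s : (x + c + e *+ k') - (x + e *+ k) \in s.
    by rewrite inE; apply/orP; right; apply/allpairsP; exists (x + e *+ k, x + c + e *+ k').
  have -> : c = ((x + c + e *+ k') - (x + e *+ k)) *~ 1 + e *~ k + e *~ (- k'%:Z).
    by rewrite mulrNz -!pmulrn; ring.
  by apply: span_add; [apply: span_add|]; apply: span_mem.
apply: span_sub => r; rewrite inE => /predU1P [->//|].
by move=> /allpairsP [[a a'] [/= al a'l ->]]; apply/subgroupB; apply: lG.
Qed.

End Subgroup.

Section Ends.
Variables (R : realType) (G : set R).
Hypothesis hG : is_subgroup G.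
Local Notation T := {x : R | G x}.
Variable d : T -> T -> R.
Hypotheses (hm : is_metric d) (hp : proper_metric d) (hi : left_invariant d).
Hypothesis nfg : ~ finitely_generated G.

Lemma d_ge0 x y : 0 <= d x y. Proof. by case: hm. Qed.
Lemma d_xx x : d x x = 0. Proof. by case: hm => _ [h _]; apply/h. Qed.
Lemma d_sym x y : d x y = d y x. Proof. by case: hm => _ [_ []]. Qed.
Lemma d_tri x y z : d x z <= d x y + d y z. Proof. by case: hm => _ [_ [_]]. Qed.

Lemma sval_inj (x y : T) : sval x = sval y -> x = y.
Proof. by case: x => x Gx; case: y => y Gy /= e; apply: eq_exist. Qed.

Definition origin : T := exist G 0 (subgroup0 hG).

Definition tr (x : T) (g : R) : T :=
  if pselect (G (sval x + g)) is left h then exist G _ h else origin.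

Lemma trE x g : G g -> sval (tr x g) = sval x + g.
Proof.
move=> Gg; rewrite /tr; case: pselect => // -[].
by apply: (subgroupD hG) Gg; exact: svalP.
Qed.

(* Left-invariance: d depends only on the difference of its arguments. *)
Definition nrm (g : R) : R := d origin (tr origin g).

Lemma d_diff x y : d x y = nrm (sval y - sval x).
Proof.
have Gyx : G (sval y - sval x) by apply: subgroupB => //; exact: svalP.
apply: (hi (g := x)) => /=; first by rewrite addr0.
by rewrite trE // add0r addrC subrK.
Qed.

Lemma tr_origin x : tr origin (sval x) = x.
Proof. by apply: sval_inj; rewrite trE ?add0r //; exact: svalP. Qed.

Lemma d_tr x g : G g -> d x (tr x g) = nrm g.
Proof. by move=> Gg; rewrite d_diff trE // addrC addKr. Qed.

Lemma d_tr2 x y g : G g -> d (tr x g) (tr y g) = d x y.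
Proof. by move=> Gg; rewrite !d_diff !trE // opprD addrACA subrr addr0. Qed.

(* Bounded sets are finite, so their points have finitely many values. *)
Lemma bounded_values (K : set T) : bounded_set d K ->
  exists l : seq R, (forall x, K x -> sval x \in l) /\ (forall r, r \in l -> G r).
Proof.
move=> [x [r Kr]]; have /(finite_image sval) := sub_finite_set Kr (hp x r).
move=> /finite_seqP [l hl]; exists l; split.
  by move=> y Ky; have : [set` l] (sval y) by rewrite -hl; exists y.
move=> g gl; have : (sval @` K) g by rewrite hl.
by case=> y _ <-; exact: svalP.
Qed.

Lemma ball_bounded r : bounded_set d [set y | d origin y <= r].
Proof. by exists origin, r. Qed.

(* A point arbitrarily far from the origin: follow a ray of a nonzero e. *)
Lemma far_point r : exists x, r < d origin x.
Proof.
have [l [ball_l _]] := bounded_values (ball_bounded r).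
have [e Ge e0] := nonzero_elem hG nfg.
have [k0 hk0] := ray_escapes 0 l e0.
have Gk : G (e *+ k0) by exact: subgroupMn.
exists (tr origin (e *+ k0)); rewrite ltNge; apply/negP => /ball_l.
by rewrite trE //; apply/negP; exact: hk0.
Qed.

Section Chains.
Variable S : set (set T * nat).

Definition Reach (x y : T) : Prop := exists s, S_chain d S x s /\ last x s = y.

Lemma Reach_refl x : Reach x x. Proof. by exists [::]. Qed.

Lemma Reach_step x y : S_step d S x y -> Reach x y.
Proof. by move=> h; exists [:: y]. Qed.

Lemma Reach_trans x y z : Reach x y -> Reach y z -> Reach x z.
Proof.
move=> [s1 [h1 <-]] [s2 [h2 <-]]; exists (s1 ++ s2); rewrite last_cat; split=> //.
by elim: s1 x h1 h2 => [|w s IH] x //= [xw ws] h2; split=> //; apply: IH.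
Qed.

Lemma Reach_sym x y : Reach x y -> Reach y x.
Proof.
move=> [s [hs <-]]; elim: s x hs => [|z s IH] x /= => [_|[[K [n [SK Kx Kz dxz]]] hs]].
  exact: Reach_refl.
apply: Reach_trans (IH z hs) _; apply: Reach_step.
by exists K, n; split=> //; rewrite d_sym.
Qed.

Hypothesis hS : glacial_scale d S.

Lemma scale_pair (a : R) : exists K n, [/\ S (K, n), bounded_set d K & a <= n%:R].
Proof.
have B0 : bounded_set d set0 by exists origin, 0.
have [K [n [SK _ hn]]] := hS.2 _ B0 (Num.Def.archi_bound `|a|).
exists K, n; split=> //; first exact: hS.1 SK.
apply: le_trans (ler_norm a) _; apply: le_trans (ltW (archi_boundP (normr_ge0 a))) _.
by rewrite ler_nat.
Qed.

Definition ray_avoids (K : set T) (e : R) (u : T) := forall k, ~ K (tr u (e *+ k)).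

Lemma ray_chain K n e u : S (K, n) -> G e -> nrm e <= n%:R ->
  ray_avoids K e u -> forall k, Reach u (tr u (e *+ k)).
Proof.
move=> SK Ge hn avoid; have Gk k : G (e *+ k) by exact: subgroupMn.
elim=> [|k IH].
  have -> : tr u (e *+ 0) = u by apply: sval_inj; rewrite trE // mulr0n addr0.
  exact: Reach_refl.
apply: Reach_trans IH (Reach_step _); exists K, n; split=> //.
by rewrite d_diff !trE // mulrS addrCA addrK.
Qed.

(* Two rays in the same direction e <> 0 keep a constant gap, and eventually
   both leave the finite set attached to a scale pair covering that gap. *)
Lemma rays_meet e u v : G e -> e != 0 ->
  exists k, Reach (tr u (e *+ k)) (tr v (e *+ k)).
Proof.
move=> Ge e0; have Gk k : G (e *+ k) by exact: subgroupMn.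
have [K [n [SK bK hn]]] := scale_pair (d u v).
have [l [Kl _]] := bounded_values bK.
have [ku hku] := ray_escapes (sval u) l e0.
have [kv hkv] := ray_escapes (sval v) l e0.
exists (maxn ku kv); apply: Reach_step; exists K, n; split; rewrite ?d_tr2 //.
- by move=> /Kl; rewrite trE //; apply/negP/hku/leq_maxl.
- by move=> /Kl; rewrite trE //; apply/negP/hkv/leq_maxr.
Qed.

Lemma avoiding_rays_reach K n e u v : S (K, n) -> G e -> e != 0 ->
  nrm e <= n%:R -> ray_avoids K e u -> ray_avoids K e v -> Reach u v.
Proof.
move=> SK Ge e0 hn au av; have [k meet] := rays_meet u v Ge e0.
apply: Reach_trans (ray_chain SK Ge hn au k) _.
exact: Reach_trans meet (Reach_sym (ray_chain SK Ge hn av k)).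
Qed.

(* Every point far from the origin is joined to the start of a ray avoiding a
   given bounded K: either its own ray avoids K, or the ray of its translate by
   the element c of [escape_shift] does, and the jump x -> x + c is an S-step
   once x is outside the set attached to a scale pair covering |c|. *)
Lemma near_avoiding_ray K e : bounded_set d K -> G e ->
  exists r, forall x, r < d origin x -> exists2 u, ray_avoids K e u & Reach x u.
Proof.
move=> bK Ge; have [l [Kl lG]] := bounded_values bK.
have [c Gc shift] := escape_shift hG nfg Ge lG.
have [K2 [n2 [SK2 [x2 [r2 K2_ball]]] hn2]] := scale_pair (nrm c).
have out_K2 y : d origin x2 + r2 < d origin y -> ~ K2 y.
  by move=> hy /K2_ball /= h; have := d_tri origin x2 y; lra.
have avoid_l y : (forall k, sval y + e *+ k \notin l) -> ray_avoids K e y.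
  move=> hy k /Kl; rewrite trE; last exact: subgroupMn.
  by apply/negP; exact: hy.
exists (d origin x2 + r2 + nrm c) => x hx.
have [ax|axc] := shift (sval x).
  by exists x; [exact: avoid_l|exact: Reach_refl].
exists (tr x c); first by apply: avoid_l => k; rewrite trE //; exact: axc.
apply: Reach_step; exists K2, n2; split; rewrite ?d_tr //.
- by apply: out_K2; have : 0 <= nrm c := d_ge0 _ _; lra.
- apply: out_K2; have := d_tri origin (tr x c) x.
  by rewrite [d (tr x c) x]d_sym d_tr //; lra.
Qed.

Lemma far_reach : exists r, forall x y,
  r < d origin x -> r < d origin y -> Reach x y.
Proof.
have [e Ge e0] := nonzero_elem hG nfg.
have [K [n [SK bK hn]]] := scale_pair (nrm e).
have [r near] := near_avoiding_ray bK Ge.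
exists r => x y /near [u au xu] /near [v av yv].
apply: Reach_trans xu (Reach_trans (avoiding_rays_reach SK Ge e0 hn au av) _).
exact: Reach_sym.
Qed.

End Chains.

Lemma glacial_const_at_infinity (f : T -> R) eps :
  glacially_oscillating d f -> 0 < eps ->
  exists r, forall x y, r < d origin x -> r < d origin y -> `|f x - f y| < eps.
Proof.
move=> go ep; have [S [hS chain_small]] := go eps ep.
have [r hr] := far_reach hS; exists r => x y hx hy.
by have [s [hs <-]] := hr x y hx hy; exact: chain_small.
Qed.

Definition Lim (f : T -> R) : R :=
  sup [set a | exists r, forall x, r < d origin x -> a <= f x].

Lemma LimP (f : T -> R) eps : glacially_oscillating d f -> 0 < eps ->
  exists r, forall x, r < d origin x -> `|f x - Lim f| <= eps.
Proof.
move=> go ep; have ep2 : 0 < eps / 2 by apply: divr_gt0.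
have [r0 hr0] := glacial_const_at_infinity go ep2.
have [x0 hx0] := far_point r0.
set E := [set a | exists r, forall x, r < d origin x -> a <= f x].
have E_low : E (f x0 - eps / 2).
  exists r0 => x hx; move: (hr0 _ _ hx0 hx); rewrite ltr_norml; lra.
have E_up : ubound E (f x0 + eps / 2).
  move=> a [ra hra]; have [x] := far_point (Num.max ra r0).
  rewrite gt_max => /andP[/hra ax /(hr0 _ _ hx0)]; rewrite ltr_norml; lra.
have Lim_low : f x0 - eps / 2 <= Lim f by apply: ub_le_sup => //; exists (f x0 + eps / 2).
have Lim_up : Lim f <= f x0 + eps / 2 by apply: ge_sup => //; exists (f x0 - eps / 2).
exists r0 => x /(hr0 _ _ hx0); rewrite ltr_norml ler_norml; lra.
Qed.

Definition end_point (g : GOfun d) : R := Lim (sval g).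

Lemma end_point_go (g : GOfun d) : glacially_oscillating d (sval g).
Proof. by case: (svalP g). Qed.

Lemma le_sum_norm n (r : 'I_n -> R) i : r i <= \sum_(j < n) `|r j|.
Proof.
rewrite (bigD1 i) //=; apply: le_trans (ler_norm (r i)) _.
by rewrite lerDl; apply: sumr_ge0.
Qed.

(* Points far out approximate end_point on any finite family. *)
Lemma end_point_in_CF : in_CF end_point.
Proof.
move=> n fs eps ep; have ep2 : 0 < eps / 2 by apply: divr_gt0.
have [r hr] := choice (fun i => LimP (end_point_go (fs i)) ep2).
have [x hx] := far_point (\sum_(j < n) `|r j|).
exists x => i; apply: le_lt_trans (hr i x (le_lt_trans (le_sum_norm r i) hx)) _.
lra.
Qed.

Definition bump (x0 y : T) : R := Num.max 0 (1 - d x0 y).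

Lemma bump_far x0 y : 1 < d x0 y -> bump x0 y = 0.
Proof. by move=> h; rewrite /bump max_l //; lra. Qed.

Lemma bump_range x0 y : 0 <= bump x0 y <= 1.
Proof. by rewrite /bump le_max lexx ge_max ler01 /=; have := d_ge0 x0 y; lra. Qed.

Lemma bump_continuous x0 : metric_continuous d (bump x0).
Proof.
move=> x eps ep; exists eps; split=> // y dxy.
have t1 := d_tri x0 x y; have t2 := d_tri x0 y x; rewrite [d y x]d_sym in t2.
rewrite /bump; have [hx|hx] := leP 0 (1 - d x0 x); have [hy|hy] := leP 0 (1 - d x0 y);
  rewrite ?(max_r hx) ?(max_r hy) ?(max_l (ltW hx)) ?(max_l (ltW hy)) ltr_norml;
  apply/andP; split; lra.
Qed.

Lemma chain_ends (S : set (set T * nat)) (P : T -> Prop) a z s :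
  (forall x y, S_step d S x y -> P x /\ P y) ->
  S_chain d S a (z :: s) -> P a /\ P (last z s).
Proof.
move=> hP; elim: s a z => [|w s IH] a z /= [az zs]; first exact: hP.
by split; [case: (hP _ _ az)|case: (IH z w zs)].
Qed.

(* bump is glacially oscillating for the scale of all bounded sets containing
   the unit ball: chains with at least one step stay outside that ball. *)
Lemma bump_glacial x0 : glacially_oscillating d (bump x0).
Proof.
move=> eps ep; set ball1 := [set y | d x0 y <= 1].
exists [set p | bounded_set d p.1 /\ ball1 `<=` p.1]; split.
  split=> [K n []//|B [b [rb hB]] N].
  exists (B `|` ball1), N; split; [split|by move=> y; left|by []].
    exists b, (`|rb| + d b x0 + 1) => y [/hB /= h|/= h].
      by have := d_ge0 b x0; have := ler_norm rb; lra.
    move: h; rewrite /ball1 /= => h.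
    by have := d_tri b x0 y; have := normr_ge0 rb; lra.
  by move=> y; right.
move=> a [_|z s hc]; first by rewrite /= subrr normr0.
have out_ball x y : S_step d [set p | bounded_set d p.1 /\ ball1 `<=` p.1] x y ->
    1 < d x0 x /\ 1 < d x0 y.
  by move=> [K [n [[_ hK] Kx Ky _]]]; rewrite !ltNge; split; apply/negP => /hK.
have [ha hl] := chain_ends out_ball hc.
by rewrite !bump_far // subrr normr0.
Qed.

Definition bump_GO (x0 : T) : GOfun d :=
  exist _ (bump x0) (And3 (bump_range x0) (bump_continuous x0) (bump_glacial x0)).

(* end_point is not an evaluation: it kills every bump, which evaluations don't. *)
Lemma end_point_not_image : ~ in_image end_point.
Proof.
move=> [x0 hx0]; have bump_x0 : bump x0 x0 = 1 by rewrite /bump d_xx subr0 max_r ?ler01.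
have Lim1 : Lim (bump x0) = 1 by rewrite -bump_x0; exact: hx0 (bump_GO x0).
have half : (0 : R) < 1 / 2 by lra.
have [r hr] := LimP (bump_glacial x0) half.
have [x] := far_point (Num.max r (d origin x0 + 1)); rewrite gt_max => /andP[/hr near far].
have x_out : 1 < d x0 x by have := d_tri origin x0 x; lra.
by move: near; rewrite Lim1 bump_far // sub0r normrN normr1; lra.
Qed.

(* The only non-evaluation point of CF is end_point: a point q of CF with
   q f <> end_point f is approximated, on f and on witnesses of q not being an
   evaluation at the finitely many points of a ball, by some x; x cannot lie
   in the ball (witness) nor outside it (there f is close to end_point f). *)
Lemma end_point_unique q : in_CF q -> ~ in_image q -> q = end_point.
Proof.
move=> qCF q_ni; apply: funext => f; apply: contrapT => /eqP qf.
set delta := `|q f - end_point f|.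
have delta_gt0 : 0 < delta by rewrite normr_gt0 subr_eq0.
have delta4_gt0 : 0 < delta / 4 by apply: divr_gt0.
have witness x : exists h : GOfun d, q h != sval h x.
  apply: contrapT => all_eq; apply: q_ni; exists x => h.
  by apply: contrapT => /eqP qh; apply: all_eq; exists h.
have [g g_wit] := choice witness.
have [r f_far] := LimP (end_point_go f) delta4_gt0.
have [l [ball_l _]] := bounded_values (ball_bounded r).
pose gap y := `|q (g (tr origin y)) - sval (g (tr origin y)) (tr origin y)|.
have gap_gt0 y : 0 < gap y by rewrite normr_gt0 subr_eq0.
have [eps [eps_gt0 eps_le eps_gap]] := pos_lower_bound l delta4_gt0 gap_gt0.
pose fs (i : 'I_(size l).+1) : GOfun d :=
  if val i is j.+1 then g (tr origin l`_j) else f.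
have [x approx] := qCF _ fs eps eps_gt0.
have [x_near|x_far] := leP (d origin x) r.
  have xl := ball_l x x_near.
  have j_lt : ((index (sval x) l).+1 < (size l).+1)%N by rewrite ltnS index_mem.
  have := approx (Ordinal j_lt); rewrite /fs /= nth_index // tr_origin distrC.
  by have := eps_gap _ xl; rewrite /gap tr_origin; lra.
have := approx ord0; have := f_far x x_far; rewrite /fs /=.
have := ler_distD (sval f x) (q f) (end_point f); rewrite -/delta distrC.
by rewrite [`|sval f x - q f|]distrC; lra.
Qed.

Theorem one_end : has_one_end d.
Proof.
exists end_point; split; [exact: end_point_in_CF|exact: end_point_not_image|].
by move=> q; apply: end_point_unique.
Qed.

End Ends.

Lemma rationals_subgroup (R : realType) : is_subgroup (@rationals R).
Proof.
split; first by exists 0; rewrite rmorph0.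
by move=> x y [p ->] [q ->]; exists (p - q); rewrite rmorphB.
Qed.

Lemma span_common_denominator (R : realType) (s : seq R) :
  (forall i : 'I_(size s), rationals s`_i) ->
  exists2 D : int, D != 0 & forall x, span s x -> exists w : int, x * D%:~R = w%:~R.
Proof.
move=> /choice [q s_q]; exists (\prod_(i < size s) denq (q i)).
  by apply/prodf_neq0 => i _; exact: denq_neq0.
have integral (i : 'I_(size s)) :
    exists z : int, s`_i * (\prod_(j < size s) denq (q j))%:~R = z%:~R.
  exists (numq (q i) * \prod_(j < size s | j != i) denq (q j)).
  rewrite (bigD1 i) //= !intrM s_q mulrA; congr (_ * _).
  by have := congr1 (@ratr R) (numqE (q i)); rewrite rmorphM !rmorph_int => ->.
have [z s_z] := choice integral.
move=> x [c ->]; exists (\sum_(i < size s) c i * z i).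
rewrite mulr_suml rmorph_sum /=; apply: eq_bigr => i _.
by rewrite -mulrA s_z intrM.
Qed.

(* (Q, +) is not finitely generated: 1/(2D) escapes every span with
   common denominator D. *)
Lemma rationals_not_fg (R : realType) : ~ finitely_generated (@rationals R).
Proof.
move=> [s rat_span].
have s_rat (i : 'I_(size s)) : rationals s`_i.
  by rewrite rat_span; have := span_nth i 1; rewrite mul1r.
have [D D0 clear] := span_common_denominator s_rat.
have : rationals (ratr ((2 * D)%:~R)^-1 : R) by exists ((2 * D)%:~R)^-1.
rewrite rat_span => /clear [w].
rewrite fmorphV rmorph_int intrM => hw.
have : (2 * w)%:~R = 1%:~R :> R by rewrite intrM -hw; field; rewrite intr_eq0.
by move/intr_inj; lia.
Qed.

Theorem corollary5p13 (R : realType) :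
  (forall G : set R, is_subgroup G -> countable G -> ~ finitely_generated G ->
     forall d : {x : R | G x} -> {x : R | G x} -> R,
       is_metric d -> proper_metric d -> left_invariant d -> has_one_end d)
  /\
  (forall d : {x : R | rationals x} -> {x : R | rationals x} -> R,
     is_metric d -> proper_metric d -> left_invariant d -> has_one_end d).
Proof.
split=> [G hG _ nfg d hm hp hi|d hm hp hi]; first exact: one_end.
exact: one_end (rationals_subgroup R) _ _ _ _ (@rationals_not_fg R).
Qed.
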